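(* Let $N\ge2$ be even and let $\mathcal M=(M_{ij})_{1\le i<j\le N}$ be a family of $\binom N2$ real symmetric $2\times2$ matrices such that $Y=\Psi(\mathcal M)\in SDD_N$ and $\phi_{SDD}(\mathcal M)$ is finite. Then there exist $N-1$ matrices $Z_1,\dots,Z_{N-1}\succ0$ such that $Y=\sum_{k=1}^{N-1}Z_k$ and $\phi_{SDD}(\mathcal M)=\sum_{k=1}^{N-1}\log\det Z_k$.
   Context: $\Psi(\mathcal M)=\sum_{i<j}\Psi_{ij}(M_{ij})$, where $\Psi_{ij}(M)$ is the $N\times N$ matrix with entries $(i,i),(i,j),(j,i),(j,j)$ equal to $M(1,1),M(1,2),M(2,1),M(2,2)$ and zeros elsewhere. $\phi_{SDD}(\mathcal M)=\sum_{i<j}\log\big(M_{ij}(1,1)M_{ij}(2,2)-M_{ij}(1,2)^2\big)$, which is finite exactly when every $M_{ij}\succ0$. $SDD_N$: matrices $DYD$ with $D$ positive diagonal and $Y$ diagonally dominant ($Y(i,i)\ge\sum_{j\ne i}|Y(i,j)|$ for all $i$). *)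

From HB Require Import structures.
From mathcomp Require Import all_boot all_order all_algebra.
From mathcomp Require Import all_classical all_reals all_analysis.
Set Implicit Arguments. Unset Strict Implicit. Unset Printing Implicit Defensive.
Import Order.TTheory GRing.Theory Num.Theory.
Local Open Scope ring_scope.

Definition symmetric_mx (R : realType) (n : nat) (A : 'M[R]_n) : Prop :=
  A^T = A.

Definition posdef (R : realType) (n : nat) (A : 'M[R]_n) : Prop :=
  symmetric_mx A /\
  forall v : 'cV[R]_n, v != 0 -> 0 < (v^T *m A *m v) ord0 ord0.

Definition Psi_ij (R : realType) (N : nat) (i j : 'I_N) (M : 'M[R]_2) : 'M[R]_N :=
  \matrix_(a < N, b < N)
    (if (a == i) && (b == i) then M ord0 ord0
     else if (a == i) && (b == j) then M ord0 ord_max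
     else if (a == j) && (b == i) then M ord_max ord0
     else if (a == j) && (b == j) then M ord_max ord_max
     else 0).

(* A family (M_ij)_{i<j} is given as a function on pairs; only i < j matters. *)
Definition Psi (R : realType) (N : nat) (M : 'I_N -> 'I_N -> 'M[R]_2) : 'M[R]_N :=
  \sum_(i < N) \sum_(j < N | (i < j)%N) Psi_ij i j (M i j).

Definition phi_SDD (R : realType) (N : nat) (M : 'I_N -> 'I_N -> 'M[R]_2) : R :=
  \sum_(i < N) \sum_(j < N | (i < j)%N)
     ln (M i j ord0 ord0 * M i j ord_max ord_max - M i j ord0 ord_max ^+ 2).

Definition diag_dominant (R : realType) (N : nat) (Y : 'M[R]_N) : Prop :=
  forall i : 'I_N, \sum_(j < N | j != i) `|Y i j| <= Y i i.

Definition SDD (R : realType) (N : nat) (X : 'M[R]_N) : Prop :=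
  exists (d : 'I_N -> R) (Y : 'M[R]_N),
    (forall i, 0 < d i) /\ diag_dominant Y /\
    X = diag_mx (\row_i d i) *m Y *m diag_mx (\row_i d i).

(* For even N, the complete graph on N vertices splits into N - 1 perfect
   matchings (the round-robin 1-factorization).  Collecting the blocks M_ij
   along the edges of the k-th matching gives a matrix Z_k which, after
   reordering the coordinates, is the direct sum of the positive definite
   2 x 2 blocks of that matching.  Hence Z_k is positive definite with
   det Z_k = prod det M_ij, every edge is counted in exactly one Z_k, and
   taking logarithms turns the products into phi_SDD. *)
From HB Require Import structures.
From mathcomp Require Import all_boot all_order all_algebra.
From mathcomp Require Import all_classical all_reals all_analysis.
From mathcomp Require Import zify ring lra.
Set Implicit Arguments. Unset Strict Implicit. Unset Printing Implicit Defensive.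
Import Order.TTheory GRing.Theory Num.Theory.

Section RoundRobin.
Variable m : nat.
Hypothesis m_odd : odd m.

Let m_gt0 : (0 < m)%N. Proof. by case: m m_odd. Qed.

Lemma double_inj_mod x y : (x < m)%N -> (y < m)%N -> x.*2 = y.*2 %[mod m] -> x = y.
Proof.
wlog le_xy : x y / (x <= y)%N => [W ltx lty e|ltx lty].
  by case: (leqP x y) => h; [exact: W | apply/esym/W => //; exact: ltnW].
move/eqP; rewrite eq_sym eqn_mod_dvd ?leq_double // -doubleB -muln2.
rewrite Gauss_dvdl ?coprimen2 //.
by case: (posnP (y - x)) => [|/dvdn_leq h /h]; lia.
Qed.

Lemma addn_inj_mod x y z : (y < m)%N -> (z < m)%N -> x + y = x + z %[mod m] -> y = z.
Proof. by move=> lty ltz /eqP; rewrite eqn_modDl !modn_small // => /eqP. Qed.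

Definition half_mod k := if odd k then (k + m)./2 else k./2.

Lemma half_mod_lt k : (k < m)%N -> (half_mod k < m)%N.
Proof. by rewrite /half_mod; case: (odd k) => h; lia. Qed.

Lemma double_half_mod k : (half_mod k).*2 = k %[mod m].
Proof.
rewrite /half_mod; case: ifP => odd_k; rewrite halfK.
  by rewrite oddD odd_k m_odd subn0 modnDr.
by rewrite odd_k subn0.
Qed.

(* The round-robin 1-factorization of the complete graph on [0, m]: vertex [m]
   plays the role of infinity, and the edge {x, y} gets the colour
   [rr_colour x y] modulo [m]. *)
Definition rr_colour x y :=
  if x == m then y.*2 else if y == m then x.*2 else x + y.

Lemma rr_colourC x y : rr_colour x y = rr_colour y x.
Proof.
rewrite /rr_colour.
by case: eqP => [->|_]; case: eqP => [e|_]; rewrite ?e // addnC.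
Qed.

Lemma rr_colour_inj x y z : (x <= m)%N -> (y <= m)%N -> (z <= m)%N ->
  y != x -> z != x -> rr_colour x y = rr_colour x z %[mod m] -> y = z.
Proof.
move=> lex ley lez neq_yx neq_zx; rewrite /rr_colour.
case: (eqVneq x m) => [exm|nxm].
  by apply: double_inj_mod; lia.
have ltx : (x < m)%N by lia.
case: (eqVneq y m) => [eym|nym]; case: (eqVneq z m) => [ezm|nzm]; rewrite ?eym ?ezm //.
- rewrite -addnn => /addn_inj_mod e.
  by move: neq_zx; rewrite -e ?eqxx //; lia.
- rewrite -addnn => /esym/addn_inj_mod e.
  by move: neq_yx; rewrite -e ?eqxx //; lia.
- by apply: addn_inj_mod; lia.
Qed.

Definition rr_partner k x :=
  if x == m then half_mod k
  else if x.*2 == k %[mod m] then m else (k + m - x) %% m.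

Lemma rr_partner_le k x : (k < m)%N -> (rr_partner k x <= m)%N.
Proof.
move=> ltk; rewrite /rr_partner; case: ifP => _; first exact/ltnW/half_mod_lt.
by case: ifP => // _; exact/ltnW/ltn_pmod.
Qed.

Lemma rr_colour_partner k x : (x <= m)%N -> rr_colour x (rr_partner k x) = k %[mod m].
Proof.
move=> lex; rewrite /rr_partner /rr_colour.
case: (eqVneq x m) => [_|nxm]; first exact: double_half_mod.
have [/eqP dbl_x|_] := boolP (x.*2 == k %[mod m]); first by rewrite eqxx.
rewrite ifN ?modnDmr; last by rewrite neq_ltn ltn_pmod.
by rewrite subnKC ?modnDr //; lia.
Qed.

Lemma rr_partner_neq k x : (k < m)%N -> (x <= m)%N -> rr_partner k x != x.
Proof.
move=> ltk lex; apply/eqP => e; have := rr_colour_partner k lex.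
rewrite e /rr_colour; case: (eqVneq x m) => [exm _|nxm].
  by move: e (half_mod_lt ltk); rewrite exm /rr_partner eqxx => ->; rewrite ltnn.
rewrite addnn => dbl_x; move: e; rewrite /rr_partner ifN // dbl_x eqxx.
by move/esym/eqP; rewrite (negbTE nxm).
Qed.

Lemma rr_partnerK k x : (k < m)%N -> (x <= m)%N -> rr_partner k (rr_partner k x) = x.
Proof.
move=> ltk lex; set y := rr_partner k x.
have ley : (y <= m)%N := rr_partner_le x ltk.
apply: (rr_colour_inj ley); rewrite ?rr_partner_le ?rr_partner_neq //.
  by rewrite eq_sym rr_partner_neq.
by rewrite (rr_colour_partner k ley) rr_colourC (rr_colour_partner k lex).
Qed.

Lemma rr_partner_inj k k' x : (k < m)%N -> (k' < m)%N -> (x <= m)%N ->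
  rr_partner k x = rr_partner k' x -> k = k'.
Proof.
move=> ltk ltk' lex e.
rewrite -(modn_small ltk) -(modn_small ltk').
by rewrite -(rr_colour_partner k lex) -(rr_colour_partner k' lex) e.
Qed.

Lemma rr_partner_onto x y : (x <= m)%N -> (y <= m)%N -> x != y ->
  exists2 k, (k < m)%N & rr_partner k x = y.
Proof.
move=> lex ley nxy; have ltk : (rr_colour x y %% m < m)%N by exact: ltn_pmod.
exists (rr_colour x y %% m) => //.
apply: (rr_colour_inj lex); rewrite ?rr_partner_le ?rr_partner_neq // 1?eq_sym //.
by rewrite (rr_colour_partner _ lex) modn_mod.
Qed.

Definition rr_match (k : 'I_m) (x : 'I_m.+1) : 'I_m.+1 := inord (rr_partner k x).

Lemma val_rr_match k x : rr_match k x = rr_partner k x :> nat.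
Proof. by rewrite inordK // ltnS rr_partner_le. Qed.

Lemma rr_matchK k : involutive (rr_match k).
Proof.
by move=> x; apply: val_inj; rewrite /= !val_rr_match rr_partnerK // -ltnS.
Qed.

Lemma rr_match_neq k x : rr_match k x != x.
Proof. by rewrite -val_eqE /= val_rr_match rr_partner_neq // -ltnS. Qed.

Lemma rr_match_onto x y : x != y -> exists k, rr_match k x = y.
Proof.
rewrite -val_eqE => /(rr_partner_onto (ltn_ord x) (ltn_ord y)) [k ltk e].
by exists (Ordinal ltk); apply: val_inj; rewrite /= val_rr_match.
Qed.

Lemma rr_match_inj x : injective (rr_match^~ x).
Proof.
move=> k k' /(congr1 val); rewrite /= !val_rr_match => e; apply: val_inj.
exact: rr_partner_inj (ltn_ord k) (ltn_ord k') (ltn_ord x) e.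
Qed.

End RoundRobin.

Local Open Scope ring_scope.

Lemma binary_form_pos (R : realDomainType) (a b d x y : R) :
  0 < a -> 0 < a * d - b ^+ 2 ->
  0 <= x * (a * x + b * y) + y * (b * x + d * y) /\
  (x != 0 \/ y != 0 -> 0 < x * (a * x + b * y) + y * (b * x + d * y)).
Proof.
move=> a_gt0 det_gt0.
have complete_square : a * (x * (a * x + b * y) + y * (b * x + d * y)) =
   (a * x + b * y) ^+ 2 + (a * d - b ^+ 2) * y ^+ 2 by ring.
split=> [|xy_neq0].
  rewrite -(pmulr_rge0 _ a_gt0) complete_square.
  exact: addr_ge0 (sqr_ge0 _) (mulr_ge0 (ltW det_gt0) (sqr_ge0 _)).
rewrite -(pmulr_rgt0 _ a_gt0).
have [y0|y_neq0] := eqVneq y 0.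
  case: xy_neq0 => [x_neq0|]; last by rewrite y0 eqxx.
  rewrite complete_square y0 !(mulr0, addr0) expr0n /= mulr0 addr0.
  by rewrite exprn_even_gt0 //= mulf_neq0 // gt_eqF.
have := sqr_ge0 (a * x + b * y).
have : 0 < y ^+ 2 by rewrite exprn_even_gt0 // y_neq0 orbT.
by rewrite complete_square; nra.
Qed.

Section PosDef2.
Variable R : realType.

Lemma mx2_quad_form (B : 'M[R]_2) (v : 'cV[R]_2) :
  (v^T *m B *m v) ord0 ord0 =
  v ord0 ord0 * (B ord0 ord0 * v ord0 ord0 + B ord0 ord_max * v ord_max ord0) +
  v ord_max ord0 * (B ord_max ord0 * v ord0 ord0 + B ord_max ord_max * v ord_max ord0).
Proof.
rewrite -mulmxA !mxE !big_ord_recl !big_ord0 ?mxE !big_ord_recl !big_ord0.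
have -> : (lift ord0 ord0 : 'I_2) = ord_max by apply: val_inj.
by rewrite !addr0.
Qed.

Lemma posdef2_minors (B : 'M[R]_2) : posdef B ->
  [/\ 0 < B ord0 ord0, 0 < B ord0 ord0 * B ord_max ord_max - B ord0 ord_max ^+ 2
    & B ord_max ord0 = B ord0 ord_max].
Proof.
case=> B_sym B_pos.
have B10 : B ord_max ord0 = B ord0 ord_max by rewrite -{1}B_sym mxE.
have a_gt0 : 0 < B ord0 ord0.
  have := B_pos (\col_i (if i == ord0 then 1 else 0)).
  rewrite mx2_quad_form !mxE /= mul1r mulr1 mulr0 addr0 mul0r addr0.
  apply; apply/negP => /eqP/matrixP/(_ ord0 ord0); rewrite !mxE /=.
  by move/eqP; rewrite oner_eq0.
split=> //.
have := B_pos (\col_i (if i == ord0 then - B ord0 ord_max else B ord0 ord0)).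
rewrite mx2_quad_form !mxE /= B10.
set a := B ord0 ord0; set b := B ord0 ord_max; set d := B ord_max ord_max.
have -> : - b * (a * - b + b * a) + a * (b * - b + d * a) = a * (a * d - b ^+ 2).
  by ring.
rewrite pmulr_rgt0 //; apply; apply/negP => /eqP/matrixP/(_ ord_max ord0).
by rewrite !mxE /=; move/eqP; rewrite (gt_eqF a_gt0).
Qed.

End PosDef2.

Section MatchingMatrix.
Variables (R : realType) (N : nat) (p : 'I_N -> 'I_N).
Hypothesis pK : involutive p.
Hypothesis p_neq : forall x, p x != x.
Variable A : 'I_N -> 'M[R]_2.
Hypothesis A_posdef : forall i : 'I_N, (i < p i)%N -> posdef (A i).

Lemma ltn_partner (x : 'I_N) : (p x < x)%N = ~~ (x < p x)%N.
Proof.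
have := p_neq x; rewrite -val_eqE /=.
by case: (ltngtP x (p x)) => // ->; rewrite eqxx.
Qed.

Definition edge_lo (x : 'I_N) := if (x < p x)%N then x else p x.

Lemma edge_lo_lt (x : 'I_N) : (edge_lo x < p (edge_lo x))%N.
Proof. by rewrite /edge_lo; case: ifP => // /negbT; rewrite pK -ltn_partner. Qed.

Lemma edge_lo_partner (x : 'I_N) : edge_lo (p x) = edge_lo x.
Proof. by rewrite /edge_lo pK ltn_partner; case: (x < p x)%N. Qed.

Lemma A_sym (i : 'I_N) : (i < p i)%N -> A i ord_max ord0 = A i ord0 ord_max.
Proof. by case/A_posdef/posdef2_minors. Qed.

Lemma A_pivot_neq0 (i : 'I_N) : (i < p i)%N -> A i ord0 ord0 != 0.
Proof. by case/A_posdef/posdef2_minors => a_gt0 _ _; rewrite gt_eqF. Qed.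

Definition matching_mx : 'M[R]_N :=
  \sum_(i : 'I_N | (i < p i)%N) Psi_ij i (p i) (A i).

Lemma matching_mxE x y : matching_mx x y =
  if y == x then (if (x < p x)%N then A x ord0 ord0 else A (p x) ord_max ord_max)
  else if y == p x then A (edge_lo x) ord0 ord_max else 0.
Proof.
have x_neq_px : (x == p x) = false by rewrite eq_sym; exact: negbTE (p_neq x).
rewrite /matching_mx summxE (bigD1 (edge_lo x)) ?edge_lo_lt //= big1 ?addr0.
  rewrite mxE /edge_lo; case x_lt: (x < p x)%N; first by rewrite eqxx /= x_neq_px.
  rewrite pK x_neq_px /= eqxx /=.
  have [->|y_neq_x] := eqVneq y x; first by rewrite x_neq_px.
  have [_|//] := eqVneq y (p x).
  by apply: A_sym; rewrite pK ltn_partner x_lt.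
move=> i /andP [i_lt i_neq]; rewrite mxE.
have -> : (x == i) = false.
  by apply/negbTE/eqP => e; subst x; move: i_neq; rewrite /edge_lo i_lt eqxx.
have -> : (x == p i) = false.
  apply/negbTE/eqP => e; subst x.
  by move: i_neq; rewrite /edge_lo pK ltn_partner i_lt eqxx.
by [].
Qed.

Lemma matching_mx_diag x : matching_mx x x =
  if (x < p x)%N then A x ord0 ord0 else A (p x) ord_max ord_max.
Proof. by rewrite matching_mxE eqxx. Qed.

Lemma matching_mx_partner x : matching_mx x (p x) = A (edge_lo x) ord0 ord_max.
Proof. by rewrite matching_mxE (negbTE (p_neq x)) eqxx. Qed.

Lemma matching_mx0 x y : y != x -> y != p x -> matching_mx x y = 0.
Proof. by move=> /negbTE y_neq_x /negbTE y_neq_px; rewrite matching_mxE y_neq_x y_neq_px.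
Qed.

Lemma matching_mx_sym : symmetric_mx matching_mx.
Proof.
apply/matrixP => x y; rewrite mxE.
have [->//|y_neq_x] := eqVneq y x.
have [->|y_neq_px] := eqVneq y (p x).
  by have := matching_mx_partner (p x); rewrite pK edge_lo_partner matching_mx_partner.
rewrite !matching_mx0 // 1?eq_sym //.
by apply: contraNneq y_neq_px => <-; rewrite pK.
Qed.

Lemma big_partner (T : Type) (idx : T) (op : Monoid.com_law idx) (F : 'I_N -> T) :
  \big[op/idx]_i F i = \big[op/idx]_(i : 'I_N | (i < p i)%N) op (F i) (F (p i)).
Proof.
rewrite (bigID (fun i : 'I_N => (i < p i)%N)) /= big_split /=; congr (op _ _).
rewrite (reindex_inj (inv_inj pK)) /=.
by apply: eq_bigl => i; rewrite pK ltn_partner negbK.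
Qed.

Definition edge_form (v : 'cV[R]_N) (i : 'I_N) :=
  v i ord0 * (A i ord0 ord0 * v i ord0 + A i ord0 ord_max * v (p i) ord0) +
  v (p i) ord0 * (A i ord0 ord_max * v i ord0 + A i ord_max ord_max * v (p i) ord0).

Lemma matching_mx_form (v : 'cV[R]_N) :
  (v^T *m matching_mx *m v) ord0 ord0 = \sum_(i : 'I_N | (i < p i)%N) edge_form v i.
Proof.
have row_sum x : \sum_y matching_mx x y * v y ord0 =
    matching_mx x x * v x ord0 + matching_mx x (p x) * v (p x) ord0.
  rewrite (bigD1 x) //= (bigD1 (p x)) ?p_neq //= big1 ?addr0 // => y /andP [? ?].
  by rewrite matching_mx0 ?mul0r.
rewrite -mulmxA mxE (eq_bigr (fun x => v x ord0 * (matching_mx x x * v x ord0 +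
  matching_mx x (p x) * v (p x) ord0))) => [|x _]; last by rewrite !mxE row_sum.
rewrite big_partner; apply: eq_bigr => i i_lt.
have pi_lt : (p i < p (p i))%N = false.
  by apply/negbTE; rewrite -ltn_partner pK.
rewrite !matching_mx_diag pi_lt !matching_mx_partner edge_lo_partner pK.
by rewrite /edge_lo i_lt /edge_form /=; ring.
Qed.

Lemma matching_mx_posdef : posdef matching_mx.
Proof.
split=> [|v v_neq0]; first exact: matching_mx_sym.
have [x vx_neq0] : exists x, v x ord0 != 0.
  apply/existsP; apply: contraNT v_neq0 => /existsPn v0.
  by apply/eqP/matrixP => i j; rewrite (ord1 j) mxE; apply/eqP/negPn.
have form_pos (i : 'I_N) : (i < p i)%N -> 0 <= edge_form v i /\
    (v i ord0 != 0 \/ v (p i) ord0 != 0 -> 0 < edge_form v i).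
  by case/A_posdef/posdef2_minors => a_gt0 det_gt0 _; exact: binary_form_pos.
rewrite matching_mx_form (bigD1 (edge_lo x)) ?edge_lo_lt //=.
rewrite ltr_pwDl ?sumr_ge0 // => [|i /andP [i_lt _]]; last by case: (form_pos i i_lt).
case: (form_pos _ (edge_lo_lt x)) => _; apply.
by rewrite /edge_lo; case: ifP => _; [left | right; rewrite pK].
Qed.

(* Gaussian elimination inside each edge {i, p i} with i < p i: the pivots are
   a = A i 0 0 and the Schur complement d - b^2 / a. *)
Definition matching_lower : 'M[R]_N := \matrix_(x, y)
  (if y == x then 1 else if (p x < x)%N && (y == p x)
   then A y ord0 ord_max / A y ord0 ord0 else 0).

Definition matching_upper : 'M[R]_N := \matrix_(x, y)
  (if (x < p x)%N then
     (if y == x then A x ord0 ord0 else if y == p x then A x ord0 ord_max else 0)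
   else (if y == x then A (p x) ord_max ord_max -
                         A (p x) ord0 ord_max ^+ 2 / A (p x) ord0 ord0 else 0)).

Lemma matching_mx_LU : matching_mx = matching_lower *m matching_upper.
Proof.
apply/matrixP => x y; rewrite [RHS]mxE.
have x_neq_px : (x == p x) = false by rewrite eq_sym; exact: negbTE (p_neq x).
have px_neq_x : (p x == x) = false by exact: negbTE (p_neq x).
case x_lt: (x < p x)%N.
  rewrite (bigD1 x) //= big1 ?addr0 => [|z z_neq]; last first.
    by rewrite !mxE (negbTE z_neq) ltn_partner x_lt /= mul0r.
  by rewrite !mxE eqxx x_lt mul1r matching_mxE x_lt /edge_lo x_lt.
have px_lt : (p x < p (p x))%N by rewrite pK ltn_partner x_lt.
rewrite (bigD1 x) //= (bigD1 (p x)) ?p_neq //= big1 ?addr0; last first.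
  move=> z /andP [z_neq_x z_neq_px].
  by rewrite !mxE (negbTE z_neq_x) (negbTE z_neq_px) andbF mul0r.
rewrite !mxE eqxx x_lt px_neq_x ltn_partner x_lt /= eqxx px_lt pK mul1r.
rewrite matching_mxE x_lt /edge_lo x_lt.
have a_neq0 := A_pivot_neq0 px_lt.
have [->|y_neq_x] := eqVneq y x; first by rewrite x_neq_px; field.
by have [_|y_neq_px] := eqVneq y (p x); [field | rewrite ?mulr0 ?addr0].
Qed.

Lemma det_matching_lower : \det matching_lower = 1.
Proof.
rewrite det_trig; first by apply: big1 => i _; rewrite mxE eqxx.
apply/is_trig_mxP => i j lt_ij; rewrite mxE -val_eqE /= gtn_eqF //.
by case: eqP => [e|_]; rewrite ?andbF // -e ltnNge (ltnW lt_ij).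
Qed.

Lemma det_matching_upper : \det matching_upper =
  \prod_(i : 'I_N | (i < p i)%N)
     (A i ord0 ord0 * A i ord_max ord_max - A i ord0 ord_max ^+ 2).
Proof.
rewrite -det_tr det_trig; last first.
  apply/is_trig_mxP => i j lt_ij; rewrite !mxE -val_eqE /= ltn_eqF //.
  by case: ifP => // j_lt; rewrite -val_eqE /= ltn_eqF // (ltn_trans lt_ij j_lt).
rewrite big_partner; apply: eq_bigr => i i_lt.
have a_neq0 := A_pivot_neq0 i_lt.
by rewrite !mxE eqxx i_lt pK ltn_partner i_lt /= eqxx; field.
Qed.

Lemma det_matching_mx : \det matching_mx =
  \prod_(i : 'I_N | (i < p i)%N)
     (A i ord0 ord0 * A i ord_max ord_max - A i ord0 ord_max ^+ 2).
Proof.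
by rewrite matching_mx_LU det_mulmx det_matching_lower mul1r det_matching_upper.
Qed.

End MatchingMatrix.

Lemma sum_pairs_partition (V : nmodType) (N m : nat) (p : 'I_m -> 'I_N -> 'I_N)
    (F : 'I_N -> 'I_N -> V) :
  (forall i j, i != j -> exists k, p k i = j) -> (forall i, injective (p^~ i)) ->
  \sum_(i < N) \sum_(j < N | (i < j)%N) F i j =
  \sum_(k < m) \sum_(i : 'I_N | (i < p k i)%N) F i (p k i).
Proof.
move=> p_onto p_inj; symmetry.
transitivity (\sum_(k < m) \sum_(i < N) \sum_(j < N | (i < j)%N)
                 (if p k i == j then F i j else 0)).
  apply: eq_bigr => k _; rewrite big_mkcond /=; apply: eq_bigr => i _.
  case: ifPn => [i_lt|i_nlt].
    rewrite (bigD1 (p k i)) //= eqxx big1 ?addr0 // => j /andP [_ j_neq].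
    by rewrite eq_sym (negbTE j_neq).
  by rewrite big1 // => j i_lt; case: eqP => // e; move: i_nlt; rewrite e i_lt.
rewrite exchange_big; apply: eq_bigr => i _.
rewrite exchange_big; apply: eq_bigr => j i_lt.
have [k0 e] := p_onto i j (negbT (ltn_eqF i_lt)).
rewrite (bigD1 k0) //= e eqxx big1 ?addr0 // => k k_neq.
by case: eqP => // e'; move: k_neq; rewrite (p_inj i k k0) ?eqxx // e e'.
Qed.

Lemma ln_prod (R : realType) (I : Type) (r : seq I) (P : pred I) (F : I -> R) :
  (forall i, P i -> 0 < F i) ->
  ln (\prod_(i <- r | P i) F i) = \sum_(i <- r | P i) ln (F i).
Proof.
apply: (big_morph_in Num.pos); [exact: rpredM | exact: rpred1 | exact: lnM |].
exact: ln1.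
Qed.

Theorem lemmaA1 (R : realType) (N : nat) (M : 'I_N -> 'I_N -> 'M[R]_2) :
  (2 <= N)%N -> ~~ odd N ->
  (forall i j : 'I_N, (i < j)%N -> symmetric_mx (M i j)) ->
  SDD (Psi M) ->
  (* phi_SDD(M) finite, i.e. every M_ij is positive definite *)
  (forall i j : 'I_N, (i < j)%N -> posdef (M i j)) ->
  exists Z : 'I_(N.-1) -> 'M[R]_N,
    (forall k, posdef (Z k)) /\
    Psi M = \sum_(k < N.-1) Z k /\
    phi_SDD M = \sum_(k < N.-1) ln (\det (Z k)).
Proof.
case: N M => [|[|n]] M // _; rewrite oddS negbK => odd_n1 _ _ M_posdef.
pose Z k := matching_mx (rr_match k) (fun i => M i (rr_match k i)).
have edge_posdef (k : 'I_n.+1) (i : 'I_n.+2) :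
  (i < rr_match k i)%N -> posdef (M i (rr_match k i)) by exact: M_posdef.
have sum_matchings := sum_pairs_partition _
  (rr_match_onto odd_n1) (rr_match_inj odd_n1).
exists Z; split; [|split].
- move=> k; apply: matching_mx_posdef; [exact: rr_matchK | exact: rr_match_neq |].
  exact: edge_posdef.
- exact: (sum_matchings _ (fun i j => Psi_ij i j (M i j))).
rewrite /phi_SDD (sum_matchings _ (fun i j =>
  ln (M i j ord0 ord0 * M i j ord_max ord_max - M i j ord0 ord_max ^+ 2))).
apply: eq_bigr => k _; rewrite det_matching_mx;
  [|exact: rr_matchK | exact: rr_match_neq | exact: edge_posdef].
by rewrite ln_prod // => i /edge_posdef /posdef2_minors [].
Qed.
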